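(* Let $G$ be a finite group and $H\le G$ a subgroup. If $H$ is mixable and the action of $G$ on the coset space $G/H$ (by left multiplication) is mixable, then $G$ is mixable and \[\mathrm{mixlen}(G)\le \mathrm{mixlen}(H)+\mathrm{mixlen}(G,G/H).\]
   Context: For a finite group $G$, a random subproduct is a random element $g_1^{\epsilon_1}\cdots g_k^{\epsilon_k}$ with $g_1,\dots,g_k\in G$ fixed and $\epsilon_1,\dots,\epsilon_k$ independent Bernoulli random variables, $\epsilon_i\sim\mathrm{Ber}(p_i)$, $p_i\in[0,1]$; $k$ is its length. $G$ is mixable if some random subproduct is exactly uniform on $G$, and $\mathrm{mixlen}(G)$ is the minimal length of such. For a transitive action of $G$ on a finite set $X$, the action is mixable if for some (equivalently every) $x_0\in X$ there is a random subproduct $\mathbf{g}$ with $\mathbf{g}x_0$ uniform on $X$; $\mathrm{mixlen}(G,X)$ is the minimal length of such a random subproduct. *)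

From HB Require Import structures.
From mathcomp Require Import all_boot all_order all_algebra all_fingroup.
From mathcomp Require Import reals.
Set Implicit Arguments. Unset Strict Implicit. Unset Printing Implicit Defensive.
Import Order.TTheory GRing.Theory Num.Theory.

Section RandomSubproducts.
Variables (R : realType) (gT : finGroupType).

Definition subprod (k : nat) (g : 'I_k -> gT) (e : {ffun 'I_k -> bool}) : gT :=
  (\prod_(i < k) (if e i then g i else 1))%g.

(* Probability of the outcome e for independent e_i ~ Ber(p_i). *)
Definition outcome_weight (k : nat) (p : 'I_k -> R) (e : {ffun 'I_k -> bool}) : R :=
  (\prod_(i < k) (if e i then p i else 1 - p i))%R.

Definition probs_ok (k : nat) (p : 'I_k -> R) : Prop :=
  forall i, (0 <= p i <= 1)%R.

Definition subprod_prob (k : nat) (g : 'I_k -> gT) (p : 'I_k -> R) (x : gT) : R :=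
  (\sum_(e : {ffun 'I_k -> bool} | subprod g e == x) outcome_weight p e)%R.

Definition mixable_len (G : {group gT}) (k : nat) : Prop :=
  exists (g : 'I_k -> gT) (p : 'I_k -> R),
    (forall i, g i \in G) /\ probs_ok p /\
    (forall x, x \in G -> subprod_prob g p x = (#|G|%:R)^-1)%R.

Definition mixable (G : {group gT}) : Prop := exists k, mixable_len G k.

Definition is_mixlen (G : {group gT}) (n : nat) : Prop :=
  mixable_len G n /\ forall m, mixable_len G m -> n <= m.

Variable aT : finType.

Definition subprod_act_prob (act : gT -> aT -> aT) (k : nat) (g : 'I_k -> gT)
    (p : 'I_k -> R) (x0 y : aT) : R :=
  (\sum_(e : {ffun 'I_k -> bool} | act (subprod g e) x0 == y) outcome_weight p e)%R.

Definition act_mixable_len (G : {group gT}) (act : gT -> aT -> aT) (X : {set aT})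
    (k : nat) : Prop :=
  exists x0, x0 \in X /\
  exists (g : 'I_k -> gT) (p : 'I_k -> R),
    (forall i, g i \in G) /\ probs_ok p /\
    (forall y, y \in X -> subprod_act_prob act g p x0 y = (#|X|%:R)^-1)%R.

Definition act_mixable (G : {group gT}) act X : Prop :=
  exists k, act_mixable_len G act X k.

Definition is_act_mixlen (G : {group gT}) act X (n : nat) : Prop :=
  act_mixable_len G act X n /\ forall m, act_mixable_len G act X m -> n <= m.

End RandomSubproducts.

Definition lmul_act (gT : finGroupType) (g : gT) (A : {set gT}) : {set gT} := (g *: A)%g.

(* If a random subproduct s moves the coset aH to a uniform coset of H, and
   h is a uniform random subproduct of H, then s (a h a^-1) is uniform on G:
   it equals x exactly when s a H = x a H and then a^-1 s^-1 x a is the value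
   taken by h, so P(s a h a^-1 = x) = 1/|G:H| * 1/|H|. Concatenating the
   generators of s with the a-conjugates of those of h gives the bound. *)
From mathcomp Require Import all_boot all_order all_algebra all_fingroup.
From mathcomp Require Import reals.
Set Implicit Arguments. Unset Strict Implicit. Unset Printing Implicit Defensive.
Import Order.TTheory GRing.Theory Num.Theory.

Definition fcat (T : Type) m n (a : 'I_m -> T) (b : 'I_n -> T) (i : 'I_(m + n)) : T :=
  match split i with inl j => a j | inr j => b j end.

Definition ffcat m n (e1 : {ffun 'I_m -> bool}) (e2 : {ffun 'I_n -> bool}) :
  {ffun 'I_(m + n) -> bool} := [ffun i => fcat e1 e2 i].

Lemma fcat_lshift (T : Type) m n (a : 'I_m -> T) (b : 'I_n -> T) j :
  fcat a b (lshift n j) = a j.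
Proof. by rewrite /fcat (unsplitK (inl _ j)). Qed.

Lemma fcat_rshift (T : Type) m n (a : 'I_m -> T) (b : 'I_n -> T) j :
  fcat a b (rshift m j) = b j.
Proof. by rewrite /fcat (unsplitK (inr _ j)). Qed.

Lemma ffcat_bij m n : bijective (fun e : {ffun 'I_m -> bool} * {ffun 'I_n -> bool} =>
  ffcat e.1 e.2).
Proof.
exists (fun e : {ffun 'I_(m + n) -> bool} =>
          ([ffun j => e (lshift n j)], [ffun j => e (rshift m j)])).
  by case=> e1 e2; congr pair; apply/ffunP => j; rewrite !ffunE ?fcat_lshift ?fcat_rshift.
move=> e; apply/ffunP => i; rewrite !ffunE /fcat.
by case: splitP => j ji; rewrite ffunE; congr (e _); apply/val_inj.
Qed.

Lemma sum_ffcat (V : nmodType) m n (F : {ffun 'I_(m + n) -> bool} -> V) :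
  (\sum_e F e = \sum_(e1 : {ffun 'I_m -> bool}) \sum_(e2 : {ffun 'I_n -> bool})
                   F (ffcat e1 e2))%R.
Proof. by rewrite pair_big (reindex _ (onW_bij _ (@ffcat_bij m n))). Qed.

Section RandomSubproductCalculus.
Variables (R : realType) (gT : finGroupType).
Local Open Scope ring_scope.

Lemma subprod_cat m n (g1 : 'I_m -> gT) (g2 : 'I_n -> gT) e1 e2 :
  subprod (fcat g1 g2) (ffcat e1 e2) = (subprod g1 e1 * subprod g2 e2)%g.
Proof.
rewrite /subprod big_split_ord /=.
by congr (_ * _)%g; apply: eq_bigr => i _; rewrite ffunE ?fcat_lshift ?fcat_rshift.
Qed.

Lemma outcome_weight_cat m n (p1 : 'I_m -> R) (p2 : 'I_n -> R) e1 e2 :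
  outcome_weight (fcat p1 p2) (ffcat e1 e2) = outcome_weight p1 e1 * outcome_weight p2 e2.
Proof.
rewrite /outcome_weight big_split_ord /=.
by congr (_ * _); apply: eq_bigr => i _; rewrite ffunE ?fcat_lshift ?fcat_rshift.
Qed.

Lemma probs_ok_cat m n (p1 : 'I_m -> R) (p2 : 'I_n -> R) :
  probs_ok p1 -> probs_ok p2 -> probs_ok (fcat p1 p2).
Proof. by move=> ok1 ok2 i; rewrite /fcat; case: split. Qed.

Lemma subprod_prob_cat m n (g1 : 'I_m -> gT) (g2 : 'I_n -> gT)
    (p1 : 'I_m -> R) (p2 : 'I_n -> R) x :
  subprod_prob (fcat g1 g2) (fcat p1 p2) x =
  \sum_(e1 : {ffun 'I_m -> bool})
     outcome_weight p1 e1 * subprod_prob g2 p2 ((subprod g1 e1)^-1 * x)%g.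
Proof.
rewrite /subprod_prob big_mkcond sum_ffcat; apply: eq_bigr => e1 _.
rewrite big_distrr [RHS]big_mkcond; apply: eq_bigr => e2 _.
rewrite subprod_cat outcome_weight_cat (canF_eq (mulKg _)).
by case: ifP; rewrite ?mulr0.
Qed.

Lemma subprod_conj k (g : 'I_k -> gT) (b : gT) e :
  subprod (fun i => g i ^ b)%g e = (subprod g e ^ b)%g.
Proof.
rewrite /subprod (big_morph (conjg^~ b) (fun x y => conjMg x y b) (conj1g b)).
by apply: eq_bigr => i _; case: (e i); rewrite ?conj1g.
Qed.

Lemma subprod_prob_conj k (g : 'I_k -> gT) (p : 'I_k -> R) (b x : gT) :
  subprod_prob (fun i => g i ^ b)%g p x = subprod_prob g p (x ^ b^-1)%g.
Proof. by apply: eq_bigl => e; rewrite subprod_conj (canF_eq (conjgK b)). Qed.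

Lemma subprod_prob_uniform (H : {group gT}) k (g : 'I_k -> gT) (p : 'I_k -> R) :
  (forall i, g i \in H) ->
  (forall x, x \in H -> subprod_prob g p x = #|H|%:R^-1) ->
  forall y, subprod_prob g p y = (y \in H)%:R / #|H|%:R.
Proof.
move=> gH unifH y; have [yH | yNH] := boolP (y \in H); first by rewrite unifH // mul1r.
rewrite mul0r /subprod_prob big1 // => e /eqP yE; case/negP: yNH; rewrite -yE.
by apply: group_prod => i _; case: (e i); rewrite ?gH.
Qed.

Lemma memJ_lcosetE (H : {group gT}) (a s x : gT) :
  (((s^-1 * x) ^ a)%g \in H) = (lmul_act s (a *: H)%g == ((x * a) *: H)%g).
Proof.
rewrite /lmul_act -lcosetM eq_sym (sameP eqP lcoset_eqP) mem_lcoset.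
by rewrite invMg /conjg !mulgA.
Qed.

Lemma mixable_len_cat (G H : {group gT}) kH kA :
  H \subset G -> mixable_len R H kH ->
  act_mixable_len R G (@lmul_act gT) (lcosets H G) kA -> mixable_len R G (kA + kH).
Proof.
move=> sHG [gH [pH [gHH [okH unifH]]]] [x0 [x0GH [gA [pA [gAG [okA unifA]]]]]].
have [a aG x0E] := lcosetsP x0GH.
exists (fcat gA (fun i => gH i ^ a^-1)%g), (fcat pA pH); split; last split.
- move=> i; rewrite /fcat; case: split => j //.
  by rewrite groupJ ?groupV // (subsetP sHG).
- exact: probs_ok_cat.
move=> x xG.
have xaGH : ((x * a) *: H)%g \in lcosets H G by apply/lcosetsP; exists (x * a)%g; rewrite ?groupM.
rewrite -(Lagrange sHG) -card_lcosets natrM invfM -(unifA _ xaGH).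
rewrite subprod_prob_cat /subprod_act_prob big_distrr /= [RHS]big_mkcond.
apply: eq_bigr => e1 _.
rewrite subprod_prob_conj invgK (subprod_prob_uniform gHH unifH) memJ_lcosetE -x0E.
by case: eqP; rewrite ?mul0r ?mulr0 // div1r mulrC.
Qed.

End RandomSubproductCalculus.

Theorem mainTheorem10 (R : realType) (gT : finGroupType) (G H : {group gT}) :
  H \subset G ->
  mixable R H ->
  act_mixable R G (@lmul_act gT) (lcosets H G) ->
  mixable R G /\
  (forall nG nH nA : nat,
     is_mixlen R G nG -> is_mixlen R H nH ->
     is_act_mixlen R G (@lmul_act gT) (lcosets H G) nA ->
     nG <= nH + nA).
Proof.
move=> sHG [kH mixH] [kA mixA]; split; first by exists (kA + kH); exact: mixable_len_cat sHG mixH mixA.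
move=> nG nH nA [_ minG] [mixH' _] [mixA' _].
by rewrite addnC; exact: minG (mixable_len_cat sHG mixH' mixA').
Qed.
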